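(* Let $2<p<6$. Then $\mathsf N(1,p)=1$ and the function $\theta\mapsto\mathsf N(\theta,p)$ is decreasing on $(\vartheta(p,2),1]$.
   Context: $\vartheta(p,2)=\frac{p-2}{p}$. For $\theta\in(\vartheta(p,2),1]$ let $q^*(\theta,p)=\frac{2p\theta}{2-p(1-\theta)}$ and, for $\theta\in(0,1]$, $p>2$, $\Lambda>0$, $\mathsf K^*_{\rm CKN}(\theta,p,\Lambda)=\big[\tfrac{2p\theta+2-p}{(p-2)^2}\big]^{\frac{p-2}{2p}}\big[\tfrac{2p\theta}{2p\theta+2-p}\big]^{\theta}\big[\tfrac{p+2}{4}\big]^{\frac{6-p}{2p}}\Big[\tfrac{\sqrt\pi\,\Gamma(\frac2{p-2})}{\Gamma(\frac2{p-2}+\frac12)}\Big]^{\frac{p-2}{p}}\Lambda^{\theta-\frac{p-2}{2p}}$. Define $\mathsf N(\theta,p)=\mathsf K^*_{\rm CKN}(\theta,p,1)^{1/\theta}\big/\mathsf K^*_{\rm CKN}(1,q^*(\theta,p),1)$. *)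

From Stdlib Require Import Reals.
From Coquelicot Require Import Coquelicot.
Open Scope R_scope.

Definition Gamma (x : R) : R :=
  RInt_gen (fun t => Rpower t (x - 1) * exp (- t)) (at_right 0) (Rbar_locally p_infty).

Definition vartheta2 (p : R) : R := (p - 2) / p.

Definition qstar (theta p : R) : R := 2 * p * theta / (2 - p * (1 - theta)).

(* K^*_CKN(theta,p,Lambda); real powers a^b written Rpower a b (all bases
   are positive in the relevant range). *)
Definition KstarCKN (theta p Lambda : R) : R :=
  Rpower ((2 * p * theta + 2 - p) / (p - 2) ^ 2) ((p - 2) / (2 * p))
  * Rpower (2 * p * theta / (2 * p * theta + 2 - p)) theta
  * Rpower ((p + 2) / 4) ((6 - p) / (2 * p))
  * Rpower (sqrt PI * Gamma (2 / (p - 2)) / Gamma (2 / (p - 2) + 1 / 2)) ((p - 2) / p)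
  * Rpower Lambda (theta - (p - 2) / (2 * p)).

Definition Nfun (theta p : R) : R :=
  Rpower (KstarCKN theta p 1) (1 / theta) / KstarCKN 1 (qstar theta p) 1.

From Stdlib Require Import Reals Lra Psatz.
From Coquelicot Require Import Coquelicot.
Open Scope R_scope.

(* With [theta = (p - 2) (x + 1) / p], the range [vartheta2 p < theta <= 1] becomes
   [0 < x <= x0 := 2 / (p - 2)] and [qstar theta p = 2 (x + 1) / x]. Both factors of [Nfun]
   are then explicit up to one common term in [x], which gives
     [ln (Nfun theta p) = (Phi x - Phi x0) / (2 (x + 1))],
     [Phi z = - ln z - (2 z - 1) ln ((z + 1/2) / z) - 2 ln (Gamma z / Gamma (z + 1/2))].
   Hence it suffices that [Phi] is strictly decreasing on [(0, +oo)]. By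
   [Gamma (z + 1) = z Gamma z], [Phi z - Phi (z + 1)] is an elementary, strictly decreasing
   function of [z], so telescoping writes [Phi x1 - Phi x2] as a fixed positive amount plus
   [Phi (x1 + n) - Phi (x2 + n)]; the log-convexity of [Gamma] traps [Phi z] between [-1] and
   [-1 + 2 / (2 z + 1)], so this remainder vanishes as [n] grows. *)

Lemma ln_le_sub1 w : 0 < w -> ln w <= w - 1.
Proof. intros Hw. pose proof (exp_ineq1_le (ln w)) as H. rewrite exp_ln in H; lra. Qed.

Lemma exp_le_compat a b : a <= b -> exp a <= exp b.
Proof. intros [H | ->]; [left; now apply exp_increasing | lra]. Qed.

Lemma Rpower_pos a b : 0 < Rpower a b.
Proof. apply exp_pos. Qed.

Lemma Rpower_sub1 t y : 0 < t -> Rpower t (y - 1) = Rpower t y / t.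
Proof.
  intros Ht. unfold Rpower. replace ((y - 1) * ln t) with (y * ln t + - ln t) by ring.
  rewrite exp_plus, exp_Ropp, exp_ln by exact Ht. field. lra.
Qed.

Lemma Rpower_lt_of_lt_root x e y : 0 < x -> 0 < e -> 0 < y < Rpower e (/ x) ->
  Rpower y x < e.
Proof.
  intros Hx He Hy. apply Rlt_le_trans with (Rpower (Rpower e (/ x)) x).
  - apply Rlt_Rpower_l; lra.
  - rewrite Rpower_mult, Rinv_l, Rpower_1 by lra. lra.
Qed.

Lemma AM_GM_scaled A B s l : 0 < A -> 0 < l -> s ^ 2 = A * B -> 2 * s <= l * A + B / l.
Proof.
  intros HA Hl Hs. apply Rmult_le_reg_r with (l * A); [nra |].
  replace ((l * A + B / l) * (l * A)) with ((l * A) ^ 2 + s ^ 2) by (rewrite Hs; field; lra).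
  pose proof (pow2_ge_0 (l * A - s)). nra.
Qed.

Lemma RInt_Chasles_R (f : R -> R) a b c : ex_RInt f a b -> ex_RInt f b c ->
  RInt f a b + RInt f b c = RInt f a c.
Proof. exact (RInt_Chasles f a b c). Qed.

Lemma at_right_0_interval c : 0 < c -> at_right 0 (fun a => 0 < a < c).
Proof.
  intros Hc. exists (mkposreal c Hc). intros y Hy Hy0. simpl in Hy.
  change (Rabs (y - 0) < c) in Hy. rewrite Rminus_0_r, Rabs_pos_eq in Hy by lra. lra.
Qed.

Lemma at_right_0_pinfty_pos_lt :
  filter_prod (at_right 0) (Rbar_locally p_infty) (fun ab => 0 < fst ab < snd ab).
Proof.
  apply Filter_prod with (Q := fun a => 0 < a < 1) (R := fun b => 1 < b).
  - apply at_right_0_interval; lra.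
  - exists 1; auto.
  - intros a b Ha Hb; simpl; lra.
Qed.

Lemma pinfty_exp_half_lt C eps : 0 < C -> 0 < eps ->
  Rbar_locally p_infty (fun b => 1 <= b /\ C * exp (- b / 2) < eps).
Proof.
  intros HC He. exists (Rmax 1 (-2 * ln (eps / C))). intros b Hb.
  pose proof (Rmax_l 1 (-2 * ln (eps / C))) as Hm1.
  pose proof (Rmax_r 1 (-2 * ln (eps / C))) as Hm2.
  split; [lra |].
  assert (Hexp : exp (- b / 2) < eps / C).
  { rewrite <- (exp_ln (eps / C)) by (apply Rdiv_lt_0_compat; lra).
    apply exp_increasing. lra. }
  apply Rmult_lt_compat_l with (r := C) in Hexp; [| lra].
  replace (C * (eps / C)) with eps in Hexp by (field; lra). exact Hexp.
Qed.

Lemma filterlim_ge_const {T} {F : (T -> Prop) -> Prop} {FF : ProperFilter F}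
  (g : T -> R) l c : F (fun y => c <= g y) -> filterlim g F (locally l) -> c <= l.
Proof.
  intros Hc Hl. exact (filterlim_le (fun _ => c) g c l Hc (filterlim_const c) Hl).
Qed.

Definition gamma_integrand (x t : R) : R := Rpower t (x - 1) * exp (- t).

Lemma gamma_integrand_pos x t : 0 < gamma_integrand x t.
Proof. apply Rmult_lt_0_compat; [apply Rpower_pos | apply exp_pos]. Qed.

Lemma gamma_integrand_continuous x t : 0 < t -> continuous (gamma_integrand x) t.
Proof.
  intros Ht. apply (ex_derive_continuous (gamma_integrand x)).
  unfold gamma_integrand, Rpower. auto_derive. lra.
Qed.

Lemma ex_RInt_gamma_integrand x a b : 0 < a -> 0 < b -> ex_RInt (gamma_integrand x) a b.
Proof.
  intros Ha Hb. apply (ex_RInt_continuous (V := R_CompleteNormedModule)).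
  intros t Ht. apply gamma_integrand_continuous.
  assert (0 < Rmin a b) by (now apply Rmin_glb_lt). lra.
Qed.

Lemma RInt_gamma_integrand_ge0 x a b : 0 < a <= b -> 0 <= RInt (gamma_integrand x) a b.
Proof.
  intros Hab. apply RInt_ge_0; [lra | apply ex_RInt_gamma_integrand; lra |].
  intros t _. left. apply gamma_integrand_pos.
Qed.

(* From [ln t <= ln s + t / s - 1] with [s = 2 |m| + 1]. *)
Definition tail_const (m : R) : R := exp (Rabs m * (ln (2 * Rabs m + 1) - 1)).

Lemma Rpower_mul_exp_le m t : 1 <= t ->
  Rpower t m * exp (- t) <= tail_const m * exp (- t / 2).
Proof.
  intros Ht. unfold Rpower, tail_const. rewrite <- !exp_plus. apply exp_le_compat.
  set (A := Rabs m). set (s := 2 * A + 1).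
  assert (HA : 0 <= A) by apply Rabs_pos.
  assert (Hs : 0 < s) by (unfold s; lra).
  assert (Hlnt : 0 <= ln t) by (rewrite <- ln_1; apply ln_le; lra).
  assert (Hln : ln t - ln s <= t / s - 1).
  { rewrite <- ln_div by lra. apply ln_le_sub1, Rdiv_lt_0_compat; lra. }
  assert (Hm : m * ln t <= A * ln t) by (apply Rmult_le_compat_r; [lra | apply Rle_abs]).
  assert (HAt : A * (t / s) <= t / 2).
  { apply Rmult_le_reg_r with s; [exact Hs |].
    replace (A * (t / s) * s) with (A * t) by (field; lra). unfold s. nra. }
  nra.
Qed.

Lemma is_RInt_exp_half C u v :
  is_RInt (fun t => C * exp (- t / 2)) u v (2 * C * (exp (- u / 2) - exp (- v / 2))).
Proof.
  set (F t := -2 * C * exp (- t / 2)).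
  replace (2 * C * (exp (- u / 2) - exp (- v / 2))) with (minus (F v) (F u))
    by (unfold F, minus, plus, opp; simpl; ring).
  apply (is_RInt_derive (V := R_CompleteNormedModule) F); intros t _; unfold F.
  - auto_derive; [easy |]. replace (- t * / 2) with (- t / 2) by (unfold Rdiv; ring). field.
  - apply (ex_derive_continuous (K := R_AbsRing) (V := R_NormedModule)). now auto_derive.
Qed.

Lemma is_RInt_Rpower_sub1 x u v : 0 < x -> 0 < u -> 0 < v ->
  is_RInt (fun t => Rpower t (x - 1)) u v ((Rpower v x - Rpower u x) / x).
Proof.
  intros Hx Hu Hv. set (F t := Rpower t x / x).
  replace ((Rpower v x - Rpower u x) / x) with (minus (F v) (F u))
    by (unfold F, minus, plus, opp; simpl; field; lra).
  assert (Hm : 0 < Rmin u v) by (now apply Rmin_glb_lt).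
  apply (is_RInt_derive (V := R_CompleteNormedModule) F); intros t Ht;
    assert (Ht0 : 0 < t) by lra; unfold F.
  - rewrite (Rpower_sub1 t x Ht0). unfold Rpower. auto_derive; [lra |]. field. lra.
  - apply (ex_derive_continuous (K := R_AbsRing) (V := R_NormedModule)).
    unfold Rpower. auto_derive. lra.
Qed.

Lemma RInt_gamma_integrand_tail_le x u v : 1 <= u <= v ->
  RInt (gamma_integrand x) u v <= 2 * tail_const (x - 1) * (exp (- u / 2) - exp (- v / 2)).
Proof.
  intros Huv. rewrite <- (is_RInt_unique _ _ _ _ (is_RInt_exp_half (tail_const (x - 1)) u v)).
  apply RInt_le; [lra | apply ex_RInt_gamma_integrand; lra | eexists; apply is_RInt_exp_half |].
  intros t Ht. apply Rpower_mul_exp_le. lra.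
Qed.

Lemma RInt_gamma_integrand_head_le x u v : 0 < x -> 0 < u <= v ->
  RInt (gamma_integrand x) u v <= (Rpower v x - Rpower u x) / x.
Proof.
  intros Hx Huv.
  rewrite <- (is_RInt_unique _ _ _ _ (is_RInt_Rpower_sub1 x u v Hx ltac:(lra) ltac:(lra))).
  apply RInt_le; [lra | apply ex_RInt_gamma_integrand; lra |
    eexists; apply is_RInt_Rpower_sub1; lra |].
  intros t Ht. unfold gamma_integrand.
  assert (exp (- t) <= 1) by (rewrite <- exp_0; apply exp_le_compat; lra).
  pose proof (Rpower_pos t (x - 1)). nra.
Qed.

Lemma ex_lim_RInt_gamma_integrand_pinfty x :
  exists l, filterlim (fun b => RInt (gamma_integrand x) 1 b) (Rbar_locally p_infty) (locally l).
Proof.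
  apply (filterlim_locally_cauchy (F := Rbar_locally p_infty)). intros eps.
  set (C := 2 * tail_const (x - 1)).
  assert (HC : 0 < C) by (apply Rmult_lt_0_compat; [lra | apply exp_pos]).
  exists (fun b => 1 <= b /\ C * exp (- b / 2) < eps).
  split; [apply pinfty_exp_half_lt; [exact HC | apply cond_pos] |].
  assert (Hcauchy : forall u v, 1 <= u <= v -> C * exp (- u / 2) < eps ->
            Rabs (RInt (gamma_integrand x) 1 v - RInt (gamma_integrand x) 1 u) < eps).
  { intros u v Huv Hu.
    rewrite <- (RInt_Chasles_R (gamma_integrand x) 1 u v) by (apply ex_RInt_gamma_integrand; lra).
    rewrite Rplus_minus_l.
    pose proof (RInt_gamma_integrand_tail_le x u v Huv) as Hle. fold C in Hle.
    pose proof (RInt_gamma_integrand_ge0 x u v ltac:(lra)).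
    pose proof (exp_pos (- v / 2)).
    rewrite Rabs_pos_eq by lra. nra. }
  intros u v [Hu Hu'] [Hv Hv']. change (Rabs (RInt (gamma_integrand x) 1 v -
    RInt (gamma_integrand x) 1 u) < eps).
  destruct (Rle_lt_dec u v).
  - now apply Hcauchy.
  - rewrite Rabs_minus_sym. apply Hcauchy; [lra | exact Hv'].
Qed.

Lemma ex_lim_RInt_gamma_integrand_0 x : 0 < x ->
  exists l, filterlim (fun a => RInt (gamma_integrand x) a 1) (at_right 0) (locally l).
Proof.
  intros Hx. apply (filterlim_locally_cauchy (F := at_right 0)). intros eps.
  pose proof (cond_pos eps) as He.
  exists (fun a => 0 < a < Rmin 1 (Rpower (eps * x) (/ x))). split.
  { apply at_right_0_interval, Rmin_glb_lt; [lra | apply Rpower_pos]. }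
  assert (Hcauchy : forall u v, 0 < u <= v -> v < Rmin 1 (Rpower (eps * x) (/ x)) ->
            Rabs (RInt (gamma_integrand x) v 1 - RInt (gamma_integrand x) u 1) < eps).
  { intros u v Huv Hv.
    pose proof (Rmin_l 1 (Rpower (eps * x) (/ x))).
    pose proof (Rmin_r 1 (Rpower (eps * x) (/ x))).
    rewrite <- (RInt_Chasles_R (gamma_integrand x) u v 1) by (apply ex_RInt_gamma_integrand; lra).
    rewrite Rabs_minus_sym, Rplus_minus_r.
    pose proof (RInt_gamma_integrand_head_le x u v Hx Huv).
    pose proof (RInt_gamma_integrand_ge0 x u v Huv).
    pose proof (Rpower_lt_of_lt_root x (eps * x) v Hx ltac:(nra) ltac:(lra)).
    assert (0 < Rpower u x / x) by (apply Rdiv_lt_0_compat; [apply Rpower_pos | exact Hx]).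
    rewrite Rabs_pos_eq by lra.
    apply Rle_lt_trans with (Rpower v x / x); [unfold Rdiv in *; lra |].
    apply Rmult_lt_reg_r with x; [exact Hx |]. unfold Rdiv.
    rewrite Rmult_assoc, Rinv_l by lra. lra. }
  intros u v Hu Hv. change (Rabs (RInt (gamma_integrand x) v 1 -
    RInt (gamma_integrand x) u 1) < eps).
  destruct (Rle_lt_dec u v).
  - apply Hcauchy; lra.
  - rewrite Rabs_minus_sym. apply Hcauchy; lra.
Qed.

Lemma is_RInt_gen_at_point_pinfty (f : R -> R) c l :
  (forall b, c <= b -> ex_RInt f c b) ->
  filterlim (fun b => RInt f c b) (Rbar_locally p_infty) (locally l) ->
  is_RInt_gen f (at_point c) (Rbar_locally p_infty) l.
Proof.
  intros Hex Hl P HP. unfold filtermapi.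
  apply Filter_prod with (Q := fun a => a = c) (R := fun b => c <= b /\ P (RInt f c b)).
  - reflexivity.
  - apply filter_and; [exists c; intros; lra | now apply Hl].
  - intros a b -> [Hb HPb]. exists (RInt f c b). split; [| exact HPb].
    apply (RInt_correct (V := R_CompleteNormedModule)). now apply Hex.
Qed.

Lemma is_RInt_gen_at_right_at_point (f : R -> R) c l : 0 < c ->
  (forall a, 0 < a < c -> ex_RInt f a c) ->
  filterlim (fun a => RInt f a c) (at_right 0) (locally l) ->
  is_RInt_gen f (at_right 0) (at_point c) l.
Proof.
  intros Hc Hex Hl P HP. unfold filtermapi.
  apply Filter_prod with (Q := fun a => 0 < a < c /\ P (RInt f a c)) (R := fun b => b = c).
  - apply filter_and; [now apply at_right_0_interval | now apply Hl].
  - reflexivity.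
  - intros a b [Ha HPa] ->. exists (RInt f a c). split; [| exact HPa].
    apply (RInt_correct (V := R_CompleteNormedModule)). now apply Hex.
Qed.

(* Positivity: split at [1]; the part over [[1, +oo)] is at least the integral over [[1, 2]]. *)
Lemma Gamma_spec x : 0 < x ->
  is_RInt_gen (gamma_integrand x) (at_right 0) (Rbar_locally p_infty) (Gamma x) /\ 0 < Gamma x.
Proof.
  intros Hx.
  destruct (ex_lim_RInt_gamma_integrand_0 x Hx) as [l1 H1].
  destruct (ex_lim_RInt_gamma_integrand_pinfty x) as [l2 H2].
  assert (G1 : is_RInt_gen (gamma_integrand x) (at_right 0) (at_point 1) l1).
  { apply is_RInt_gen_at_right_at_point; [lra | | exact H1].
    intros; apply ex_RInt_gamma_integrand; lra. }
  assert (G2 : is_RInt_gen (gamma_integrand x) (at_point 1) (Rbar_locally p_infty) l2).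
  { apply is_RInt_gen_at_point_pinfty; [| exact H2].
    intros; apply ex_RInt_gamma_integrand; lra. }
  pose proof (is_RInt_gen_Chasles _ 1 l1 l2 G1 G2) as G.
  replace (Gamma x) with (l1 + l2) by (symmetry; exact (is_RInt_gen_unique _ _ G)).
  split; [exact G |].
  assert (L1 : 0 <= l1).
  { refine (filterlim_ge_const _ l1 0 _ H1).
    apply (filter_imp (fun a => 0 < a < 1)); [| apply at_right_0_interval; lra].
    intros a Ha. apply RInt_gamma_integrand_ge0. lra. }
  assert (P12 : 0 < RInt (gamma_integrand x) 1 2).
  { apply RInt_gt_0; [lra | intros; apply gamma_integrand_pos |].
    intros; apply gamma_integrand_continuous; lra. }
  assert (L2 : RInt (gamma_integrand x) 1 2 <= l2).
  { refine (filterlim_ge_const _ l2 _ _ H2).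
    exists 2. intros b Hb.
    rewrite <- (RInt_Chasles_R (gamma_integrand x) 1 2 b) by (apply ex_RInt_gamma_integrand; lra).
    pose proof (RInt_gamma_integrand_ge0 x 2 b ltac:(lra)). lra. }
  lra.
Qed.

Lemma Gamma_pos x : 0 < x -> 0 < Gamma x.
Proof. intros Hx. apply (Gamma_spec x Hx). Qed.

Definition gamma_ibp_term (x t : R) : R := - (Rpower t x * exp (- t)).

Lemma is_derive_gamma_ibp_term x t : 0 < t ->
  is_derive (gamma_ibp_term x) t (gamma_integrand (x + 1) t - x * gamma_integrand x t).
Proof.
  intros Ht. unfold gamma_ibp_term, gamma_integrand. replace (x + 1 - 1) with x by ring.
  rewrite (Rpower_sub1 t x Ht). unfold Rpower. auto_derive; [lra |]. field. lra.
Qed.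

Lemma Rabs_gamma_ibp_term x t : Rabs (gamma_ibp_term x t) = Rpower t x * exp (- t).
Proof.
  unfold gamma_ibp_term. rewrite Rabs_Ropp, Rabs_pos_eq; [reflexivity |].
  left; apply Rmult_lt_0_compat; [apply Rpower_pos | apply exp_pos].
Qed.

Lemma gamma_ibp_term_lim_0 x : 0 < x -> filterlim (gamma_ibp_term x) (at_right 0) (locally 0).
Proof.
  intros Hx. apply filterlim_locally. intros eps. pose proof (cond_pos eps) as He.
  apply (filter_imp (fun y => 0 < y < Rmin 1 (Rpower eps (/ x)))).
  2: { apply at_right_0_interval, Rmin_glb_lt; [lra | apply Rpower_pos]. }
  intros y Hy. pose proof (Rmin_r 1 (Rpower eps (/ x))).
  change (Rabs (gamma_ibp_term x y - 0) < eps). rewrite Rminus_0_r, Rabs_gamma_ibp_term.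
  pose proof (Rpower_lt_of_lt_root x eps y Hx He ltac:(lra)).
  assert (exp (- y) <= 1) by (rewrite <- exp_0; apply exp_le_compat; lra).
  pose proof (Rpower_pos y x). pose proof (exp_pos (- y)). nra.
Qed.

Lemma gamma_ibp_term_lim_pinfty x :
  filterlim (gamma_ibp_term x) (Rbar_locally p_infty) (locally 0).
Proof.
  apply filterlim_locally. intros eps.
  apply (filter_imp (fun b => 1 <= b /\ tail_const x * exp (- b / 2) < eps)).
  2: { apply pinfty_exp_half_lt; [apply exp_pos | apply cond_pos]. }
  intros b [Hb Hsmall]. change (Rabs (gamma_ibp_term x b - 0) < eps).
  rewrite Rminus_0_r, Rabs_gamma_ibp_term. pose proof (Rpower_mul_exp_le x b Hb). lra.
Qed.

Lemma Gamma_succ x : 0 < x -> Gamma (x + 1) = x * Gamma x.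
Proof.
  intros Hx. destruct (Gamma_spec x Hx) as [G _].
  assert (Hpos : filter_prod (at_right 0) (Rbar_locally p_infty)
    (fun ab => forall t, Rmin (fst ab) (snd ab) <= t <= Rmax (fst ab) (snd ab) -> 0 < t)).
  { refine (filter_imp _ _ _ at_right_0_pinfty_pos_lt).
    intros [a b] Hab t Ht; simpl in *. rewrite Rmin_left in Ht by lra. lra. }
  assert (Hderive : forall t, 0 < t ->
    Derive (gamma_ibp_term x) t = gamma_integrand (x + 1) t - x * gamma_integrand x t).
  { intros t Ht. now apply is_derive_unique, is_derive_gamma_ibp_term. }
  assert (D : is_RInt_gen (Derive (gamma_ibp_term x)) (at_right 0) (Rbar_locally p_infty) (0 - 0)).
  { apply is_RInt_gen_Derive;
      [| | apply gamma_ibp_term_lim_0; exact Hx | apply gamma_ibp_term_lim_pinfty];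
      refine (filter_imp _ _ _ Hpos); intros ab Hab t Ht; specialize (Hab t Ht).
    - eexists; now apply is_derive_gamma_ibp_term.
    - apply (continuous_ext_loc _ (fun t => gamma_integrand (x + 1) t - x * gamma_integrand x t)).
      + exists (mkposreal (t / 2) ltac:(lra)). intros y Hy.
        change (Rabs (y - t) < t / 2) in Hy. apply Rabs_def2 in Hy.
        rewrite Hderive by lra. reflexivity.
      + apply (continuous_minus (K := R_AbsRing) (V := R_NormedModule));
          [| apply (continuous_scal_r (K := R_AbsRing) (V := R_NormedModule) x)];
          now apply gamma_integrand_continuous. }
  assert (S : is_RInt_gen (gamma_integrand (x + 1)) (at_right 0) (Rbar_locally p_infty)
                (plus (0 - 0) (scal x (Gamma x)))).
  { apply (is_RInt_gen_ext
      (fun t => plus (Derive (gamma_ibp_term x) t) (scal x (gamma_integrand x t)))).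
    - refine (filter_imp _ _ _ Hpos). intros ab Hab t Ht.
      rewrite Hderive by (apply Hab; lra). unfold plus, scal; simpl. unfold mult; simpl. ring.
    - exact (is_RInt_gen_plus _ _ _ _ D (is_RInt_gen_scal _ x _ G)). }
  change (RInt_gen (gamma_integrand (x + 1)) (at_right 0) (Rbar_locally p_infty) = x * Gamma x).
  rewrite (is_RInt_gen_unique _ _ S). unfold plus, scal; simpl. unfold mult; simpl. ring.
Qed.

Lemma gamma_integrand_midpoint_sq x y t :
  gamma_integrand ((x + y) / 2) t ^ 2 = gamma_integrand x t * gamma_integrand y t.
Proof.
  unfold gamma_integrand, Rpower. simpl. rewrite Rmult_1_r, <- !exp_plus. f_equal. field.
Qed.

Lemma Gamma_midpoint_le x y l : 0 < x -> 0 < y -> 0 < l ->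
  2 * Gamma ((x + y) / 2) <= l * Gamma x + Gamma y / l.
Proof.
  intros Hx Hy Hl.
  destruct (Gamma_spec x Hx) as [Gx _]. destruct (Gamma_spec y Hy) as [Gy _].
  destruct (Gamma_spec ((x + y) / 2) ltac:(lra)) as [Gm _].
  assert (N : norm (scal 2 (Gamma ((x + y) / 2))) <=
                plus (scal l (Gamma x)) (scal (/ l) (Gamma y))).
  { apply (RInt_gen_norm (Fa := at_right 0) (Fb := Rbar_locally p_infty)
      (fun t => scal 2 (gamma_integrand ((x + y) / 2) t))
      (fun t => plus (scal l (gamma_integrand x t)) (scal (/ l) (gamma_integrand y t))));
      [| | exact (is_RInt_gen_scal _ 2 _ Gm) |
         exact (is_RInt_gen_plus _ _ _ _ (is_RInt_gen_scal _ l _ Gx)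
                  (is_RInt_gen_scal _ (/ l) _ Gy))].
    - refine (filter_imp _ _ _ at_right_0_pinfty_pos_lt). intros [a b] Hab; simpl in *; lra.
    - refine (filter_imp _ _ _ at_right_0_pinfty_pos_lt). intros [a b] Hab t Ht.
      change (Rabs (2 * gamma_integrand ((x + y) / 2) t) <=
                l * gamma_integrand x t + / l * gamma_integrand y t).
      pose proof (gamma_integrand_pos ((x + y) / 2) t).
      rewrite Rabs_pos_eq by lra.
      pose proof (AM_GM_scaled _ _ _ l (gamma_integrand_pos x t) Hl
                    (gamma_integrand_midpoint_sq x y t)).
      unfold Rdiv in *. lra. }
  change (Rabs (2 * Gamma ((x + y) / 2)) <= l * Gamma x + / l * Gamma y) in N.
  pose proof (Rle_abs (2 * Gamma ((x + y) / 2))). unfold Rdiv. lra.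
Qed.

Lemma Gamma_midpoint_sq_le x y : 0 < x -> 0 < y ->
  Gamma ((x + y) / 2) ^ 2 <= Gamma x * Gamma y.
Proof.
  intros Hx Hy.
  pose proof (Gamma_pos ((x + y) / 2) ltac:(lra)) as Hm.
  pose proof (sqrt_lt_R0 _ (Gamma_pos x Hx)) as Ha.
  pose proof (sqrt_lt_R0 _ (Gamma_pos y Hy)) as Hb.
  pose proof (sqrt_sqrt _ (Rlt_le _ _ (Gamma_pos x Hx))) as Ea.
  pose proof (sqrt_sqrt _ (Rlt_le _ _ (Gamma_pos y Hy))) as Eb.
  set (a := sqrt (Gamma x)) in *. set (b := sqrt (Gamma y)) in *.
  (* [l = sqrt (Gamma y / Gamma x)] balances the two terms of [Gamma_midpoint_le]. *)
  pose proof (Gamma_midpoint_le x y (b / a) Hx Hy (Rdiv_lt_0_compat _ _ Hb Ha)) as H.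
  rewrite <- Ea, <- Eb in H |- *.
  replace (b / a * (a * a) + b * b / (b / a)) with (2 * (a * b)) in H by (field; lra).
  replace (a * a * (b * b)) with ((a * b) ^ 2) by ring.
  apply pow_incr. lra.
Qed.

Definition Phi (z : R) : R :=
  - ln z - (2 * z - 1) * (ln (z + 1 / 2) - ln z) - 2 * (ln (Gamma z) - ln (Gamma (z + 1 / 2))).

Definition Phi_drop (z : R) : R :=
  ln (z + 1) - ln z - (2 * z + 1) * (ln (z + 1 / 2) + ln (z + 1) - ln z - ln (z + 3 / 2)).

Lemma Phi_sub_succ z : 0 < z -> Phi z - Phi (z + 1) = Phi_drop z.
Proof.
  intros Hz.
  assert (G1 : Gamma (z + 1) = z * Gamma z) by now apply Gamma_succ.
  assert (G2 : Gamma (z + 1 + 1 / 2) = (z + 1 / 2) * Gamma (z + 1 / 2)).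
  { replace (z + 1 + 1 / 2) with (z + 1 / 2 + 1) by field. apply Gamma_succ; lra. }
  pose proof (Gamma_pos z Hz). pose proof (Gamma_pos (z + 1 / 2) ltac:(lra)).
  unfold Phi, Phi_drop. rewrite G1, G2, !ln_mult by lra.
  replace (z + 1 + 1 / 2) with (z + 3 / 2) by field. ring.
Qed.

Definition Phi_drop_deriv (z : R) : R :=
  2 / ((2 * z + 3) * (z + 1)) - 2 * (ln (z + 1 / 2) + ln (z + 1) - ln z - ln (z + 3 / 2)).

Lemma is_derive_Phi_drop z : 0 < z -> is_derive Phi_drop z (Phi_drop_deriv z).
Proof.
  intros Hz. unfold Phi_drop, Phi_drop_deriv.
  auto_derive; [repeat split; lra | field; repeat split; lra].
Qed.

(* [ln w <= w - 1] for [w = z (z + 3/2) / ((z + 1/2) (z + 1))], and [1 - w = 1 / ((2z+1)(z+1))]. *)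
Lemma Phi_drop_deriv_neg z : 0 < z -> Phi_drop_deriv z < 0.
Proof.
  intros Hz. unfold Phi_drop_deriv.
  set (w := z * (z + 3 / 2) / ((z + 1 / 2) * (z + 1))).
  assert (Hw : 0 < w) by (unfold w; apply Rdiv_lt_0_compat; nra).
  assert (Eln : ln w = ln z + ln (z + 3 / 2) - ln (z + 1 / 2) - ln (z + 1))
    by (unfold w; rewrite ln_div, !ln_mult by nra; ring).
  assert (Ew : w - 1 = - / ((2 * z + 1) * (z + 1))) by (unfold w; field; lra).
  assert (Hlt : / ((2 * z + 3) * (z + 1)) < / ((2 * z + 1) * (z + 1)))
    by (apply Rinv_lt_contravar; nra).
  pose proof (ln_le_sub1 w Hw). unfold Rdiv. lra.
Qed.

Lemma Phi_drop_decreasing a b : 0 < a -> a < b -> Phi_drop b < Phi_drop a.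
Proof.
  intros Ha Hab.
  destruct (MVT_gen Phi_drop a b Phi_drop_deriv) as [c [Hc E]].
  - intros z Hz. rewrite Rmin_left, Rmax_right in Hz by lra. apply is_derive_Phi_drop. lra.
  - intros z Hz. rewrite Rmin_left, Rmax_right in Hz by lra.
    apply continuity_pt_filterlim, (ex_derive_continuous (K := R_AbsRing) (V := R_NormedModule)).
    eexists; apply is_derive_Phi_drop; lra.
  - rewrite Rmin_left, Rmax_right in Hc by lra.
    pose proof (Phi_drop_deriv_neg c ltac:(lra)). nra.
Qed.

Lemma Gamma_half_shift_sq_le z : 0 < z -> Gamma (z + 1 / 2) ^ 2 <= z * Gamma z ^ 2.
Proof.
  intros Hz. pose proof (Gamma_midpoint_sq_le z (z + 1) Hz ltac:(lra)) as H.
  replace ((z + (z + 1)) / 2) with (z + 1 / 2) in H by field.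
  rewrite Gamma_succ in H by exact Hz. lra.
Qed.

Lemma Gamma_half_shift_sq_ge z : 0 < z ->
  (z * Gamma z) ^ 2 <= (z + 1 / 2) * Gamma (z + 1 / 2) ^ 2.
Proof.
  intros Hz.
  pose proof (Gamma_midpoint_sq_le (z + 1 / 2) (z + 1 / 2 + 1) ltac:(lra) ltac:(lra)) as H.
  replace ((z + 1 / 2 + (z + 1 / 2 + 1)) / 2) with (z + 1) in H by field.
  rewrite !Gamma_succ in H by lra. lra.
Qed.

Lemma ln_sq_le_mul_sq a b c : 0 < a -> 0 < b -> 0 < c -> a ^ 2 <= b * c ^ 2 ->
  2 * ln a <= ln b + 2 * ln c.
Proof.
  intros Ha Hb Hc H. apply ln_le in H; [| now apply pow_lt].
  rewrite ln_mult, !ln_pow in H by (try apply pow_lt; assumption). simpl in H. lra.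
Qed.

Lemma ln_half_shift_le z : 0 < z -> 2 * z * (ln (z + 1 / 2) - ln z) <= 1.
Proof.
  intros Hz. rewrite <- ln_div by lra.
  pose proof (ln_le_sub1 ((z + 1 / 2) / z) ltac:(apply Rdiv_lt_0_compat; lra)) as H.
  replace ((z + 1 / 2) / z - 1) with (/ (2 * z)) in H by (field; lra).
  apply Rmult_le_compat_l with (r := 2 * z) in H; [| lra].
  rewrite Rinv_r in H by lra. exact H.
Qed.

Lemma ln_half_shift_ge z : 0 < z -> 1 / (2 * z + 1) <= ln (z + 1 / 2) - ln z.
Proof.
  intros Hz. pose proof (ln_le_sub1 (z / (z + 1 / 2)) ltac:(apply Rdiv_lt_0_compat; lra)) as H.
  rewrite ln_div in H by lra.
  replace (z / (z + 1 / 2) - 1) with (- (1 / (2 * z + 1))) in H by (field; lra). lra.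
Qed.

Lemma Phi_ge z : 0 < z -> -1 <= Phi z.
Proof.
  intros Hz. pose proof (Gamma_pos z Hz). pose proof (Gamma_pos (z + 1 / 2) ltac:(lra)).
  pose proof (ln_sq_le_mul_sq (z * Gamma z) (z + 1 / 2) (Gamma (z + 1 / 2)) ltac:(nra)
                ltac:(lra) ltac:(lra) (Gamma_half_shift_sq_ge z Hz)).
  pose proof (ln_half_shift_le z Hz). rewrite ln_mult in * by lra. unfold Phi. lra.
Qed.

Lemma Phi_le z : 1 / 2 <= z -> Phi z <= - ((2 * z - 1) / (2 * z + 1)).
Proof.
  intros Hz. pose proof (Gamma_pos z ltac:(lra)). pose proof (Gamma_pos (z + 1 / 2) ltac:(lra)).
  pose proof (ln_sq_le_mul_sq (Gamma (z + 1 / 2)) z (Gamma z) ltac:(lra) ltac:(lra) ltac:(lra)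
                (Gamma_half_shift_sq_le z ltac:(lra))).
  pose proof (Rmult_le_compat_l (2 * z - 1) _ _ ltac:(lra) (ln_half_shift_ge z ltac:(lra))).
  unfold Phi. unfold Rdiv in *. lra.
Qed.

Lemma Phi_sub_telescope x1 x2 n : 0 < x1 -> x1 < x2 ->
  Phi_drop x1 - Phi_drop x2 + (Phi (x1 + INR n + 1) - Phi (x2 + INR n + 1)) <= Phi x1 - Phi x2.
Proof.
  intros H1 H12. pose proof (Phi_sub_succ x1 H1). pose proof (Phi_sub_succ x2 ltac:(lra)).
  induction n as [| n IH]; [simpl INR; rewrite !Rplus_0_r; lra |].
  pose proof (pos_INR n). rewrite S_INR.
  pose proof (Phi_sub_succ (x1 + INR n + 1) ltac:(lra)).
  pose proof (Phi_sub_succ (x2 + INR n + 1) ltac:(lra)).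
  pose proof (Phi_drop_decreasing (x1 + INR n + 1) (x2 + INR n + 1) ltac:(lra) ltac:(lra)).
  replace (x1 + (INR n + 1) + 1) with (x1 + INR n + 1 + 1) by ring.
  replace (x2 + (INR n + 1) + 1) with (x2 + INR n + 1 + 1) by ring.
  lra.
Qed.

(* Telescoping reduces the claim to [Phi_drop x1 > Phi_drop x2], up to the error
   [Phi (x1 + n + 1) - Phi (x2 + n + 1) >= - 2 / (2 (x2 + n + 1) + 1)], which vanishes. *)
Lemma Phi_decreasing x1 x2 : 0 < x1 -> x1 < x2 -> Phi x2 < Phi x1.
Proof.
  intros H1 H12.
  pose proof (Phi_drop_decreasing x1 x2 H1 H12) as Hdrop.
  destruct (archimed_cor1 (Phi_drop x1 - Phi_drop x2) ltac:(lra)) as [N [HN HN0]].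
  pose proof (Phi_sub_telescope x1 x2 N H1 H12).
  pose proof (lt_0_INR N HN0).
  pose proof (Phi_ge (x1 + INR N + 1) ltac:(lra)).
  pose proof (Phi_le (x2 + INR N + 1) ltac:(lra)).
  assert (Herr : 2 / (2 * (x2 + INR N + 1) + 1) < / INR N).
  { apply Rmult_lt_reg_r with (INR N * (2 * (x2 + INR N + 1) + 1)); [nra |].
    field_simplify; lra. }
  replace (- ((2 * (x2 + INR N + 1) - 1) / (2 * (x2 + INR N + 1) + 1)))
    with (-1 + 2 / (2 * (x2 + INR N + 1) + 1)) in * by (field; lra).
  lra.
Qed.

Lemma KstarCKN_pos t p L : 0 < KstarCKN t p L.
Proof. unfold KstarCKN. repeat apply Rmult_lt_0_compat; apply Rpower_pos. Qed.

Lemma ln_KstarCKN t p L :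
  ln (KstarCKN t p L) =
    (p - 2) / (2 * p) * ln ((2 * p * t + 2 - p) / (p - 2) ^ 2)
    + t * ln (2 * p * t / (2 * p * t + 2 - p))
    + (6 - p) / (2 * p) * ln ((p + 2) / 4)
    + (p - 2) / p * ln (sqrt PI * Gamma (2 / (p - 2)) / Gamma (2 / (p - 2) + 1 / 2))
    + (t - (p - 2) / (2 * p)) * ln L.
Proof. unfold KstarCKN, Rpower. rewrite <- !exp_plus, ln_exp. ring. Qed.

Lemma ln_sqrt_PI_Gamma_ratio s : 0 < s ->
  ln (sqrt PI * Gamma s / Gamma (s + 1 / 2))
  = ln (sqrt PI) + ln (Gamma s) - ln (Gamma (s + 1 / 2)).
Proof.
  intros Hs. pose proof (Gamma_pos s Hs). pose proof (Gamma_pos (s + 1 / 2) ltac:(lra)).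
  pose proof (sqrt_lt_R0 _ PI_RGT_0).
  rewrite ln_div, ln_mult by (try apply Rmult_lt_0_compat; assumption). reflexivity.
Qed.

Lemma ln_KstarCKN_qstar x : 0 < x ->
  2 * (x + 1) * ln (KstarCKN 1 (2 * (x + 1) / x) 1)
  = 2 * ln (sqrt PI) - Phi x + (2 * x + 2) * ln (x + 1) - (2 * x + 1) * ln (x + 1 / 2).
Proof.
  intros Hx. set (q := 2 * (x + 1) / x).
  rewrite ln_KstarCKN, ln_1.
  replace ((2 * q * 1 + 2 - q) / (q - 2) ^ 2) with (x * (x + 1 / 2))
    by (unfold q; field; lra).
  replace (2 * q * 1 / (2 * q * 1 + 2 - q)) with ((x + 1) / (x + 1 / 2))
    by (unfold q; field; lra).
  replace ((q + 2) / 4) with ((x + 1 / 2) / x) by (unfold q; field; lra).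
  replace (2 / (q - 2)) with x by (unfold q; field; lra).
  rewrite ln_sqrt_PI_Gamma_ratio, ln_mult, !ln_div by lra.
  unfold Phi, q. field. lra.
Qed.

Lemma ln_KstarCKN_param p x : 2 < p -> 0 < x ->
  2 * (x + 1) / ((p - 2) * (x + 1) / p) * ln (KstarCKN ((p - 2) * (x + 1) / p) p 1)
  = 2 * ln (sqrt PI) - Phi (2 / (p - 2))
    + (2 * x + 2) * ln (x + 1) - (2 * x + 1) * ln (x + 1 / 2).
Proof.
  intros Hp Hx. rewrite ln_KstarCKN, ln_1.
  set (x0 := 2 / (p - 2)).
  assert (Hx0 : 0 < x0) by (apply Rdiv_lt_0_compat; lra).
  replace ((2 * p * ((p - 2) * (x + 1) / p) + 2 - p) / (p - 2) ^ 2) with ((x + 1 / 2) * x0)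
    by (unfold x0; field; lra).
  replace (2 * p * ((p - 2) * (x + 1) / p) / (2 * p * ((p - 2) * (x + 1) / p) + 2 - p))
    with ((x + 1) / (x + 1 / 2)) by (field; repeat split; nra).
  replace ((p + 2) / 4) with ((x0 + 1 / 2) / x0) by (unfold x0; field; lra).
  rewrite ln_sqrt_PI_Gamma_ratio, ln_mult, !ln_div by lra.
  unfold Phi. replace (2 * x0 - 1) with ((6 - p) / (p - 2)) by (unfold x0; field; lra).
  field. lra.
Qed.

Lemma vartheta2_lt_param_pos p t : 2 < p -> vartheta2 p < t -> 0 < p * t / (p - 2) - 1.
Proof.
  intros Hp Ht. unfold vartheta2 in Ht.
  apply Rmult_lt_compat_l with (r := p) in Ht; [| lra].
  replace (p * ((p - 2) / p)) with (p - 2) in Ht by (field; lra).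
  replace (p * t / (p - 2) - 1) with ((p * t - (p - 2)) / (p - 2)) by (field; lra).
  apply Rdiv_lt_0_compat; lra.
Qed.

Lemma Nfun_eq_exp_Phi p t : 2 < p -> vartheta2 p < t ->
  Nfun t p = exp ((Phi (p * t / (p - 2) - 1) - Phi (2 / (p - 2))) / (2 * (p * t / (p - 2)))).
Proof.
  intros Hp Ht. set (x := p * t / (p - 2) - 1).
  assert (Hx : 0 < x) by exact (vartheta2_lt_param_pos p t Hp Ht).
  assert (Et : t = (p - 2) * (x + 1) / p) by (unfold x; field; lra).
  assert (Ht0 : 0 < t) by (rewrite Et; apply Rdiv_lt_0_compat; nra).
  replace (p * t / (p - 2)) with (x + 1) by (unfold x; ring).
  assert (Eq : qstar t p = 2 * (x + 1) / x)
    by (unfold qstar; rewrite Et; field; repeat split; nra).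
  pose proof (ln_KstarCKN_param p x Hp Hx) as E1. rewrite <- Et in E1.
  pose proof (ln_KstarCKN_qstar x Hx) as E2. rewrite <- Eq in E2.
  unfold Nfun, Rpower at 1. rewrite <- (exp_ln _ (KstarCKN_pos 1 (qstar t p) 1)).
  unfold Rdiv at 1. rewrite <- exp_Ropp, <- exp_plus. f_equal.
  apply Rmult_eq_reg_l with (2 * (x + 1)); [| lra].
  replace (2 * (x + 1) * (1 / t * ln (KstarCKN t p 1) + - ln (KstarCKN 1 (qstar t p) 1)))
    with (2 * (x + 1) / t * ln (KstarCKN t p 1) - 2 * (x + 1) * ln (KstarCKN 1 (qstar t p) 1))
    by (field; lra).
  rewrite E1, E2. field. lra.
Qed.

Lemma Phi_sub_ratio_decreasing x0 x1 x2 : 0 < x1 -> x1 < x2 -> x2 <= x0 ->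
  (Phi x2 - Phi x0) / (2 * (x2 + 1)) < (Phi x1 - Phi x0) / (2 * (x1 + 1)).
Proof.
  intros H1 H12 H20.
  pose proof (Phi_decreasing x1 x2 H1 H12).
  assert (Phi x0 <= Phi x2) by (destruct H20 as [H20 | ->]; [left; apply Phi_decreasing |]; lra).
  apply Rle_lt_trans with ((Phi x2 - Phi x0) / (2 * (x1 + 1))).
  - apply Rmult_le_compat_l; [lra |]. apply Rinv_le_contravar; lra.
  - apply Rmult_lt_compat_r; [apply Rinv_0_lt_compat |]; lra.
Qed.

Theorem lemma4 (p : R) (hp2 : 2 < p) (hp6 : p < 6) :
  Nfun 1 p = 1 /\
  (forall theta1 theta2 : R,
     vartheta2 p < theta1 -> theta1 < theta2 -> theta2 <= 1 ->
     Nfun theta2 p < Nfun theta1 p).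
Proof.
  split.
  - unfold Nfun. replace (qstar 1 p) with p by (unfold qstar; field; lra).
    rewrite Rdiv_1_r, Rpower_1 by apply KstarCKN_pos.
    pose proof (KstarCKN_pos 1 p 1). field. lra.
  - intros t1 t2 H1 H12 H2.
    rewrite !Nfun_eq_exp_Phi by lra. apply exp_increasing.
    pose proof (vartheta2_lt_param_pos p t1 hp2 H1).
    assert (Hmono : forall t t', t <= t' -> p * t / (p - 2) - 1 <= p * t' / (p - 2) - 1).
    { intros t t' Htt'. unfold Rdiv. apply Rplus_le_compat_r, Rmult_le_compat_r;
        [apply Rlt_le, Rinv_0_lt_compat |]; nra. }
    replace (2 / (p - 2)) with (p * 1 / (p - 2) - 1) by (field; lra).
    replace (2 * (p * t1 / (p - 2))) with (2 * (p * t1 / (p - 2) - 1 + 1)) by ring.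
    replace (2 * (p * t2 / (p - 2))) with (2 * (p * t2 / (p - 2) - 1 + 1)) by ring.
    apply Phi_sub_ratio_decreasing; [lra | | apply Hmono; lra].
    unfold Rdiv. apply Rplus_lt_compat_r, Rmult_lt_compat_r; [apply Rinv_0_lt_compat |]; nra.
Qed.
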